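(* Let $R>1$, $C\geq1$ and $\delta\in(0,1)$. Let $h:[-1,1]\setminus\{0\}\to\mathbb R$ satisfy $h(x)\ll e^{|x|^{-1+\delta}}$ for $x\neq0$, and assume $|h(x)|\to\infty$ as $x\to0^\pm$ for some choice of sign $\pm$. Let $\xi:(0,1]\to(0,1]$ satisfy $\lim_{x\to0^+}\xi(x)=0$. Then there exist $\nu>0$ and $\psi:[1,\infty)\to\mathbb R_{>0}$ with $\lim_{t\to+\infty}\psi(t)=+\infty$ such that $$\sup_{(Cj^{1+\delta}\psi(1/z))^{-1}<|x|<1}\frac{|h(x)|}{R^j}<\inf_{0<\pm y\leq\xi(z)}\frac{|h(y)|}{\psi(1/z)}$$ for all integers $j\geq1$ and all $z\in(0,\nu]$.
   Context: In the infimum, $y$ ranges over reals with $0<y\le\xi(z)$ if the sign is $+$, and $0<-y\le\xi(z)$ if the sign is $-$, matching the side on which $|h|\to\infty$. *)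

From HB Require Import structures.
From mathcomp Require Import all_boot all_order all_algebra.
From mathcomp Require Import all_classical all_reals all_analysis.
Set Implicit Arguments. Unset Strict Implicit. Unset Printing Implicit Defensive.

(* Let F(z) be the infimum on the right; F(z) -> +oo as z -> 0+.  Put
   a = ln F(z) / 4 and let psi(1/z) be of size a^(1/e), e = 1 + 1/delta^2.
   For (C j^(1+delta) psi)^-1 < |x| the growth bound on h gives
     |x|^(delta-1) <= (C psi)^(1-delta) j^(1-delta^2) <= j ln R + a,
   the last step absorbing the sublinear power of j into j ln R at a cost of
   order (C psi)^e.  So the supremum is at most |K| e^a, K the implied
   constant of the growth bound, while the infimum is at least
   F / psi = e^(4a) / psi, which is larger once a is large. *)

From HB Require Import structures.
From mathcomp Require Import all_boot all_order all_algebra.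
From mathcomp Require Import all_classical all_reals all_analysis.
From mathcomp Require Import ring lra.
Set Implicit Arguments. Unset Strict Implicit. Unset Printing Implicit Defensive.
Import Order.TTheory GRing.Theory Num.Theory.
Import numFieldNormedType.Exports.
Local Open Scope classical_set_scope.
Local Open Scope ring_scope.

Lemma sublinear_powR_le (R : realType) (L W m eps j : R) :
  0 < L -> 0 < W -> 1 <= m -> L^-1 <= m -> 0 < eps < 1 -> 1 <= j ->
  W * j `^ (1 - eps) <= L * j + (W * m) `^ (1 + eps^-1).
Proof.
move=> L0 W0 m1 Lm /andP[eps0 eps1] j1.
have j0 : 0 < j := lt_le_trans ltr01 j1.
have Wm0 : 0 < W * m by rewrite mulr_gt0 // (lt_le_trans ltr01 m1).
have [W_le|W_gt] := leP W (L * j `^ eps).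
  have -> : L * j = L * j `^ eps * j `^ (1 - eps).
    by rewrite -mulrA -powRD ?(gt_eqF j0) ?implybT // addrCA subrr addr0 powRr1 // ltW.
  by apply: ler_wpDr; rewrite ?powR_ge0 // ler_wpM2r ?powR_ge0.
have j_le : j <= (W * m) `^ eps^-1.
  rewrite -[leLHS](powRr1 (ltW j0)) -(mulfV (lt0r_neq0 eps0)) powRrM.
  apply: ge0_ler_powR; rewrite ?nnegrE ?invr_ge0 ?powR_ge0 ?(ltW eps0) ?(ltW Wm0) //.
  apply: (le_trans (ltW _) (ler_wpM2l (ltW W0) Lm)).
  by rewrite ltr_pdivlMr // mulrC.
apply: ler_wpDl; first by rewrite mulr_ge0 ?ltW.
rewrite [leRHS]powRD ?(gt_eqF Wm0) ?implybT // powRr1 ?(ltW Wm0) //.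
apply: ler_pM; rewrite ?powR_ge0 ?(ltW W0) //.
  exact: ler_peMr (ltW W0) m1.
apply: le_trans j_le; apply: ler1_powR => //.
by rewrite lerBlDr lerDl (ltW eps0).
Qed.

Lemma powR_opp_le (R : realType) (x y p : R) :
  0 < y -> y^-1 < x -> 0 <= p -> x `^ (- p) <= y `^ p.
Proof.
move=> y0 yx p0; have x0 : 0 < x by apply: lt_trans yx; rewrite invr_gt0.
rewrite -mulN1r powRrM powR_inv1 ?(ltW x0) //.
apply: ge0_ler_powR; rewrite ?nnegrE ?invr_ge0 ?(ltW x0) ?(ltW y0) //.
by rewrite -[y]invrK lef_pV2 ?posrE ?invr_gt0 // ltW.
Qed.

Lemma near_at_right0_le1 (R : realType) (P : R -> Prop) :
  (\forall t \near 0^'+, P t) ->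
  exists2 nu : R, 0 < nu <= 1 & forall t, 0 < t <= nu -> P t.
Proof.
move=> /nbhs_ballP [e /= e0 eP].
exists (Num.min (e / 2) 1); first by rewrite lt_min divr_gt0 //= ltr01 ge_min lexx orbT.
move=> t /andP[t0]; rewrite le_min => /andP[te _].
by apply: (eP t) => //; rewrite /ball /= sub0r normrN gtr0_norm //; lra.
Qed.

Lemma at_right0_inv_cvgy (R : realType) (F : R -> R) :
  F z @[z --> 0^'+] --> +oo -> F t^-1 @[t --> +oo] --> +oo.
Proof.
move=> F_cvgy; apply/cvgryPge => A.
have [nu /andP[nu0 _] F_ge] := near_at_right0_le1 (cvgry_ge F_cvgy A).
have nuV0 : 0 < nu^-1 by rewrite invr_gt0.
near=> t; have t_ge : nu^-1 <= t by near: t; apply: nbhs_pinfty_ge; rewrite num_real.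
have t0 : 0 < t := lt_le_trans nuV0 t_ge.
by apply: F_ge; rewrite invr_gt0 t0 -[nu]invrK lef_pV2 ?posrE.
Unshelve. all: by end_near.
Qed.

Lemma ln_ge_of_expR_le (R : realType) (c u : R) : expR c <= u -> c <= ln u.
Proof.
by move=> cu; rewrite -ler_expR lnK // posrE (lt_le_trans (expR_gt0 c) cu).
Qed.

Definition side_inf (R : realType) (h xi : R -> R) (s z : R) : R :=
  inf [set `|h y| | y in [set y | 0 < s * y <= xi z]].

Lemma side_inf_le (R : realType) (h xi : R -> R) (s z y : R) :
  0 < s * y <= xi z -> side_inf h xi s z <= `|h y|.
Proof. by move=> y_in; apply: ge_inf; [exists 0 => _ [? _ <-] | exists y]. Qed.

Lemma side_inf_cvgy (R : realType) (h xi : R -> R) (s : R) :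
  s = 1 \/ s = -1 -> `|h (s * t)| @[t --> 0^'+] --> +oo ->
  (\forall z \near 0^'+, 0 < xi z) -> xi z @[z --> 0^'+] --> 0 ->
  side_inf h xi s z @[z --> 0^'+] --> +oo.
Proof.
move=> s_sign h_cvgy xi_gt0 xi_cvg0; apply/cvgryPge => M.
have ss : s * s = 1 by case: s_sign => ->; rewrite ?mulr1 ?mulrNN ?mulr1.
have [eta /andP[eta0 _] h_ge] := near_at_right0_le1 (cvgry_ge h_cvgy M).
near=> z; apply: lb_le_inf.
  exists `|h (s * xi z)|, (s * xi z) => //=.
  by rewrite mulrA ss mul1r lexx andbT; near: z.
move=> _ [y /andP[sy0 sy_le] <-].
rewrite -[y]mul1r -ss -mulrA; apply: h_ge; rewrite sy0 (le_trans sy_le) //.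
by near: z; apply: cvgr_le xi_cvg0 _ eta0.
Unshelve. all: by end_near.
Qed.

Section growth_estimate.
Variables (R : realType) (Rb C delta K : R) (h : R -> R).
Hypotheses (Rb_gt1 : 1 < Rb) (C_ge1 : 1 <= C).
Hypotheses (delta_gt0 : 0 < delta) (delta_lt1 : delta < 1).
Hypothesis h_growth : forall x, -1 <= x <= 1 -> x != 0 ->
  `|h x| <= K * expR (`|x| `^ (delta - 1)).

Let L := ln Rb.
Let m := 1 + L^-1.
Let e := 1 + (delta ^+ 2)^-1.

Let L_gt0 : 0 < L. Proof. exact: ln_gt0. Qed.
Let m_ge1 : 1 <= m. Proof. by rewrite lerDl invr_ge0 ltW. Qed.
Let m_gt0 : 0 < m. Proof. exact: lt_le_trans ltr01 m_ge1. Qed.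
Let e_ge1 : 1 <= e. Proof. by rewrite lerDl invr_ge0 sqr_ge0. Qed.
Let e_gt0 : 0 < e. Proof. exact: lt_le_trans ltr01 e_ge1. Qed.

Let powRK_e (b : R) : 0 <= b -> (b `^ e) `^ e^-1 = b.
Proof. by move=> b0; rewrite -powRrM mulfV ?lt0r_neq0 // powRr1. Qed.

Let powRKV_e (b : R) : 0 <= b -> (b `^ e^-1) `^ e = b.
Proof. by move=> b0; rewrite -powRrM mulVf ?lt0r_neq0 // powRr1. Qed.

Definition level (u : R) : R := Num.max m ((ln u / 4) `^ e^-1) / (m * C).

Definition threshold : R := expR (4 * m `^ e + 2 * `|K|).

Lemma level_gt0 (u : R) : 0 < level u.
Proof.
rewrite divr_gt0 ?mulr_gt0 ?(lt_le_trans ltr01 C_ge1) //.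
by rewrite lt_max m_gt0.
Qed.

Lemma level_cvgy : level u @[u --> +oo] --> +oo.
Proof.
apply/cvgryPge => A; set b := `|A| * (m * C).
have mC0 : 0 < m * C by rewrite mulr_gt0 ?(lt_le_trans ltr01 C_ge1).
have b0 : 0 <= b by rewrite mulr_ge0 // ltW.
near=> u; apply: (le_trans (ler_norm A)).
have bu : b `^ e <= ln u / 4.
  rewrite ler_pdivlMr // mulrC; apply: ln_ge_of_expR_le.
  by near: u; apply: nbhs_pinfty_ge; rewrite num_real.
rewrite ler_pdivlMr // -/b le_max; apply/orP; right.
rewrite -(powRK_e b0); apply: ge0_ler_powR => //.
- by rewrite invr_ge0 ltW.
- by rewrite nnegrE powR_ge0.
- by rewrite nnegrE (le_trans (powR_ge0 _ _) bu).
Unshelve. all: by end_near.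
Qed.

Let budget_ge (u : R) : threshold <= u -> m `^ e + `|K| / 2 <= ln u / 4.
Proof. by move=> /ln_ge_of_expR_le; lra. Qed.

Let m_le_root (u : R) : threshold <= u -> m <= (ln u / 4) `^ e^-1.
Proof.
move=> /budget_ge u_ge.
have me_le : m `^ e <= ln u / 4 by apply: le_trans _ u_ge; rewrite lerDl divr_ge0.
rewrite -(powRK_e (ltW m_gt0)); apply: ge0_ler_powR => //.
- by rewrite invr_ge0 ltW.
- by rewrite nnegrE powR_ge0.
- by rewrite nnegrE (le_trans (powR_ge0 _ _) me_le).
Qed.

Let level_eq (u : R) : threshold <= u -> level u = (ln u / 4) `^ e^-1 / (m * C).
Proof. by move=> /m_le_root mV; rewrite /level (max_idPr mV). Qed.

Let exponent_le (W j y : R) : 1 <= W -> 1 <= j ->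
  (W * j `^ (1 + delta))^-1 < y -> y `^ (delta - 1) <= L * j + (W * m) `^ e.
Proof.
move=> W1 j1 y_gt.
have W0 : 0 < W := lt_le_trans ltr01 W1.
have Y0 : 0 < W * j `^ (1 + delta) by rewrite mulr_gt0 // powR_gt0 // (lt_le_trans ltr01 j1).
rewrite -opprB; apply: (le_trans (powR_opp_le Y0 y_gt _)); first by rewrite subr_ge0 ltW.
rewrite powRM ?(ltW W0) ?powR_ge0 // -powRrM.
have -> : (1 + delta) * (1 - delta) = 1 - delta ^+ 2 by ring.
have eps01 : 0 < delta ^+ 2 < 1 by rewrite exprn_gt0 // expr_lt1 ?ltW.
apply: le_trans (sublinear_powR_le L_gt0 W0 m_ge1 _ eps01 j1); last by rewrite lerDr.
by rewrite ler_wpM2r ?powR_ge0 // ler1_powR // lerBlDr lerDl ltW.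
Qed.

Lemma growth_div_Rb_le (u : R) (j : nat) (x : R) : threshold <= u -> (0 < j)%N ->
  (C * j%:R `^ (1 + delta) * level u)^-1 < `|x| < 1 ->
  `|h x| / Rb ^+ j <= `|K| * expR (ln u / 4).
Proof.
move=> u_ge j_gt0 /andP[x_gt x_lt1].
set V := (ln u / 4) `^ e^-1.
have mV : m <= V := m_le_root u_ge.
have W1 : 1 <= V / m by rewrite ler_pdivlMr // mul1r.
have Y_eq : C * j%:R `^ (1 + delta) * level u = V / m * j%:R `^ (1 + delta).
  by rewrite level_eq // -/V; field; rewrite !lt0r_neq0 ?(lt_le_trans ltr01 C_ge1).
rewrite {}Y_eq in x_gt.
have x_gt0 : 0 < `|x|.
  apply: le_lt_trans x_gt; rewrite invr_ge0 mulr_ge0 ?powR_ge0 //.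
  by rewrite divr_ge0 ?powR_ge0 ?ltW.
have j_ge1 : 1 <= j%:R :> R by rewrite ler1n.
have := exponent_le W1 j_ge1 x_gt; rewrite divfK ?lt0r_neq0 // powRKV_e; last first.
  by apply: le_trans (budget_ge u_ge); rewrite addr_ge0 ?powR_ge0 ?divr_ge0.
move=> x_exp.
have Rb_pow : Rb ^+ j = expR (j%:R * L) by rewrite expRM_natl lnK // posrE (lt_trans ltr01).
rewrite ler_pdivrMr ?Rb_pow ?expR_gt0 // -mulrA -expRD.
have x_in : -1 <= x <= 1 by rewrite -ler_norml ltW.
apply: (le_trans (h_growth x_in _)); first by rewrite -normr_gt0.
apply: (le_trans (ler_wpM2r (expR_ge0 _) (ler_norm K))).
by rewrite ler_wpM2l // ler_expR (le_trans x_exp) // addrC (mulrC L).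
Qed.

Lemma growth_bound_lt (u : R) : threshold <= u -> `|K| * expR (ln u / 4) < u / level u.
Proof.
move=> u_ge; set a := ln u / 4; set V := a `^ e^-1.
have a_ge : m `^ e + `|K| / 2 <= a := budget_ge u_ge.
have a_ge0 : 0 <= a by apply: le_trans a_ge; rewrite addr_ge0 ?powR_ge0 ?divr_ge0.
have V_ge1 : 1 <= V := le_trans m_ge1 (m_le_root u_ge).
have u_gt0 : 0 < u := lt_le_trans (expR_gt0 _) u_ge.
have u_eq : u = expR (2 * a) * expR a * expR a.
  have -> : expR (2 * a) * expR a * expR a = expR (ln u) by rewrite -!expRD /a; congr expR; field.
  by rewrite lnK // posrE.
have level_lt : level u < expR a.
  rewrite level_eq // -/a -/V; apply: (@le_lt_trans _ _ V).
    rewrite ler_pdivrMr ?mulr_gt0 ?(lt_le_trans ltr01 C_ge1) //.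
    by apply: ler_peMr; [exact: le_trans ler01 V_ge1 | exact: mulr_ege1].
  apply: (@le_lt_trans _ _ a); first by rewrite -[leRHS](powRKV_e a_ge0) -/V le1r_powR.
  by apply: lt_le_trans (expR_ge1Dx a); rewrite ltrDr.
have K_le : `|K| <= expR (2 * a).
  apply: le_trans (expR_ge1Dx _); apply: le_trans (ler_wpDl ler01 (lexx _)).
  by move: a_ge; have := powR_ge0 m e; lra.
rewrite ltr_pdivlMr ?level_gt0 // [X in _ < X]u_eq.
apply: (@le_lt_trans _ _ (expR (2 * a) * expR a * level u)).
  by rewrite ler_wpM2r ?(ltW (level_gt0 u)) // ler_wpM2r ?expR_ge0.
by rewrite ltr_pM2l ?mulr_gt0 ?expR_gt0.
Qed.

End growth_estimate.

Theorem lemma3p11 (R : realType) (Rb C delta : R) (h xi : R -> R) (s : R) :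
  1 < Rb -> 1 <= C -> 0 < delta < 1 ->
  (exists K : R, forall x : R, -1 <= x <= 1 -> x != 0 ->
     `|h x| <= K * expR (`|x| `^ (delta - 1))) ->
  (s = 1 \/ s = -1) ->
  (`|h (s * t)| @[t --> 0^'+] --> +oo) ->
  (forall x : R, 0 < x <= 1 -> 0 < xi x <= 1) ->
  (xi x @[x --> 0^'+] --> 0) ->
  exists (nu : R) (psi : R -> R),
    0 < nu <= 1 /\
    (forall t : R, 1 <= t -> 0 < psi t) /\
    (psi t @[t --> +oo] --> +oo) /\
    forall (j : nat) (z : R), (1 <= j)%N -> 0 < z <= nu ->
      (ereal_sup [set (`|h x| / Rb ^+ j)%:E | x in
          [set x : R | ((C * (j%:R `^ (1 + delta)) * psi z^-1)^-1 < `|x| < 1)%R]]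
       < ereal_inf [set (`|h y| / psi z^-1)%:E | y in
          [set y : R | (0 < s * y <= xi z)%R]])%E.
Proof.
move=> Rb_gt1 C_ge1 /andP[delta_gt0 delta_lt1] [K h_growth] s_sign h_cvgy xi_01 xi_cvg0.
have xi_gt0 : \forall z \near 0^'+, 0 < xi z.
  near=> z; suff /xi_01/andP[] : 0 < z <= 1 by [].
  by apply/andP; split; near: z; [exact: nbhs_right_gt | exact: nbhs_right_le].
have F_cvgy := side_inf_cvgy s_sign h_cvgy xi_gt0 xi_cvg0.
have [nu nu01 F_ge] := near_at_right0_le1 (cvgry_ge F_cvgy (threshold Rb delta K)).
pose psi t := level Rb C delta (side_inf h xi s t^-1).
exists nu, psi; split => //; split; first by move=> t _; exact: level_gt0.
split; first exact: cvg_comp (at_right0_inv_cvgy F_cvgy) (level_cvgy _ Rb_gt1 C_ge1).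
move=> j z j_gt0 z_in; rewrite /psi invrK; set u := side_inf h xi s z.
have u_ge : threshold Rb delta K <= u := F_ge z z_in.
apply: (@le_lt_trans _ _ (`|K| * expR (ln u / 4))%:E).
  apply: ge_ereal_sup => _ [x x_in <-]; rewrite lee_fin.
  exact: (growth_div_Rb_le Rb_gt1 C_ge1 delta_gt0 delta_lt1 h_growth u_ge j_gt0).
apply: (@lt_le_trans _ _ (u / level Rb C delta u)%:E).
  by rewrite lte_fin (growth_bound_lt Rb_gt1 C_ge1 u_ge).
apply: le_ereal_inf_tmp => _ [y y_in <-].
by rewrite lee_fin ler_pM2r ?invr_gt0 ?(level_gt0 _ Rb_gt1 C_ge1) // side_inf_le.
Unshelve. all: by end_near.
Qed.
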